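(* Let $G=R_2$, let $\mathcal{X}$ be a linear vector field on $G$ with associated matrix $\mathcal{D}^*$ conjugated to $\begin{bmatrix}a&-b\\ b&a\end{bmatrix}$ with $b\neq0$, and let $h:G\to G$, $h(t,x,y)=(t,0,\beta_3y)$ with $\beta_3\neq0$, so that $K=\ker h=\{(t,x,y)\in G:t=y=0\}$. Then the pair $(\mathcal{X},\pi_K)$ is observable.
   Context: $R_2$ is $\mathbb{R}^3$ with elements $(t,x,y)$ and product $(t,x,y)\cdot(s,z,w)=(t+s,\,x+z,\,y+e^tw)$; its identity is $(0,0,0)$. A linear vector field on $G$ is a vector field whose flow $(\varphi_s)_{s\in\mathbb{R}}$ is a one-parameter group of automorphisms of $G$. Every linear vector field $\mathcal{X}$ on $R_2$ has the form $\mathcal{X}(t,v)=(0,\mathcal{D}^*v+\Lambda_t\xi)$, $v=(x,y)^T$, where $\mathcal{D}^*\in\mathbb{R}^{2\times2}$ is its associated matrix, $\xi\in\mathbb{R}^2$, $\Lambda_t=\mathrm{diag}(t,e^t-1)$; its flow is $\varphi_s(t,v)=(t,\,e^{s\mathcal{D}^*}v+F_s\Lambda_t\xi)$ with $F_s=\sum_{j\ge1}\frac{s^j(\mathcal{D}^* )^{j-1}}{j!}$. A matrix $M$ is conjugated to $N$ if $N=PMP^{-1}$ for some $P\in GL_2(\mathbb{R})$. For a closed subgroup $K$, $\pi_K:G\to G/K$ is the canonical projection. The pair $(\mathcal{X},\pi_K)$ is observable if for all $x_1\neq x_2$ in $G$ there is $t\ge0$ with $\pi_K(\varphi_t(x_1))\ne\pi_K(\varphi_t(x_2))$.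 *)

From HB Require Import structures.
From mathcomp Require Import all_boot all_order all_algebra.
From mathcomp Require Import all_classical all_reals all_analysis.
Set Implicit Arguments. Unset Strict Implicit. Unset Printing Implicit Defensive.
Import Order.TTheory GRing.Theory Num.Theory.
Import numFieldTopology.Exports numFieldNormedType.Exports.
Local Open Scope ring_scope.
Local Open Scope classical_set_scope.

Section R2.
Variable R : realType.

(* Elements (t, x, y) of R_2 = R^3, written (t, v) with v = (x, y)^T. *)
Definition R2 := (R * 'cV[R]_2)%type.

(* diag(1, e^t) : the action of t on v in the product. *)
Definition rho (t : R) : 'M[R]_2 :=
  \matrix_(i, j) (if i == j then (if i == 0 then 1 else expR t) else 0).

(* (t,x,y).(s,z,w) = (t+s, x+z, y+e^t w) *)
Definition mulR2 (g h : R2) : R2 := (g.1 + h.1, g.2 + rho g.1 *m h.2).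
Definition oneR2 : R2 := (0, 0).

Definition Lambda (t : R) : 'M[R]_2 :=
  \matrix_(i, j) (if i == j then (if i == 0 then t else expR t - 1) else 0).

Definition expm (s : R) (D : 'M[R]_2) : 'M[R]_2 :=
  \matrix_(i, j) limn (fun n : nat =>
     ((\sum_(k < n) ((s ^+ k / (k`!)%:R) *: D ^+ k)) i j : R)).

Definition Fs (s : R) (D : 'M[R]_2) : 'M[R]_2 :=
  \matrix_(i, j) limn (fun n : nat =>
     ((\sum_(k < n) ((s ^+ k.+1 / (k.+1`!)%:R) *: D ^+ k)) i j : R)).

(* The linear vector field X(t,v) = (0, D v + Lambda_t xi) is determined by
   (D, xi); its flow is phi_s(t,v) = (t, e^{sD} v + F_s Lambda_t xi). *)
Definition lvf_flow (D : 'M[R]_2) (xi : 'cV[R]_2) (s : R) (g : R2) : R2 :=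
  (g.1, expm s D *m g.2 + Fs s D *m Lambda g.1 *m xi).

Definition conjugated (M N : 'M[R]_2) : Prop :=
  exists P : 'M[R]_2, P \in unitmx /\ N = P *m M *m invmx P.

Definition rotmx (a b : R) : 'M[R]_2 :=
  \matrix_(i, j) (if i == j then a else if i == 0 then - b else b).

Definition hmap (beta3 : R) (g : R2) : R2 :=
  (g.1, \col_i (if i == 0 then 0 else beta3 * g.2 1 0)).

Definition kerR2 (f : R2 -> R2) : set R2 := [set g | f g = oneR2].

(* canonical projection G -> G/K, a point mapped to its left coset gK *)
Definition piK (K : set R2) (g : R2) : set R2 := [set mulR2 g k | k in K].

Definition observable (phi : R -> R2 -> R2) (pi : R2 -> set R2) : Prop :=
  forall g1 g2 : R2, g1 <> g2 ->
    exists s : R, 0 <= s /\ pi (phi s g1) <> pi (phi s g2).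

End R2.

From HB Require Import structures.
From mathcomp Require Import all_boot all_order all_algebra.
From mathcomp Require Import all_classical all_reals all_analysis.
From mathcomp Require Import ring lra.
Import Order.TTheory GRing.Theory Num.Theory.
Import numFieldTopology.Exports numFieldNormedType.Exports.
Set Implicit Arguments. Unset Strict Implicit.
Unset Printing Implicit Defensive.
Local Open Scope ring_scope.

(* The quotient by K = {t = y = 0} records exactly t and y, so points with
   different t are already separated at time 0.  For points with the same t
   the flows differ by e^{sD} w with w = v1 - v2, and one needs the
   y-coordinate of e^{sD} w to be nonzero for some s >= 0.  This holds at s = 0
   unless w is a multiple of e_x; then the y-coordinate is w_x e^{sD}_{yx}
   = w_x (s D_{yx} + O(s^2)), nonzero for small s > 0, because D_{yx} = 0 would
   make e_x a real eigenvector of D, whereas D is similar to a rotation-dilation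
   with b <> 0. *)

Lemma big_ord2 (V : nmodType) (F : 'I_2 -> V) : \sum_(i < 2) F i = F 0 + F 1.
Proof.
by rewrite !big_ord_recl big_ord0 addr0; congr (F _ + F _); exact: val_inj.
Qed.

Lemma ord2_cases (i : 'I_2) : i = 0 \/ i = 1.
Proof. by case: i => [[|[|//]]] ?; [left | right]; exact: val_inj. Qed.

Section Rotation.
Variable R : realType.

Lemma rotmx_eigenvector_eq0 (a b l : R) (v : 'cV[R]_2) :
  b != 0 -> rotmx a b *m v = l *: v -> v = 0.
Proof.
move=> b0 /matrixP ev.
have := ev 0 0; have := ev 1 0; rewrite !mxE !big_ord2 !mxE /= => e1 e0.
have pos : (a - l) ^+ 2 + b ^+ 2 != 0.
  by rewrite lt0r_neq0 // ltr_pwDr ?sqr_ge0 // exprn_even_gt0.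
have v0 : ((a - l) ^+ 2 + b ^+ 2) * v 0 0 = 0.
  transitivity ((a - l) * (a * v 0 0 + - b * v 1 0 - l * v 0 0)
    + b * (b * v 0 0 + a * v 1 0 - l * v 1 0)); first by ring.
  by rewrite e0 e1 !subrr !mulr0 addr0.
have v1 : ((a - l) ^+ 2 + b ^+ 2) * v 1 0 = 0.
  transitivity ((a - l) * (b * v 0 0 + a * v 1 0 - l * v 1 0)
    - b * (a * v 0 0 + - b * v 1 0 - l * v 0 0)); first by ring.
  by rewrite e0 e1 !subrr !mulr0 subr0.
move: v0 v1 => /eqP; rewrite mulf_eq0 (negbTE pos) => /eqP v0.
move=> /eqP; rewrite mulf_eq0 (negbTE pos) => /eqP v1.
by apply/matrixP => i j; rewrite (ord1 j) mxE; case: (ord2_cases i) => ->.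
Qed.

Lemma conjugated_eigenvector (D N : 'M[R]_2) (v : 'cV[R]_2) (l : R) :
  conjugated D N -> D *m v = l *: v -> v != 0 ->
  exists2 u : 'cV[R]_2, u != 0 & N *m u = l *: u.
Proof.
move=> [P [uP ->]] ev v0; exists (P *m v).
  apply: contra v0 => /eqP Pv0.
  by rewrite -[v]mul1mx -(mulVmx uP) -mulmxA Pv0 mulmx0.
by rewrite -!mulmxA (mulmxA _ P) mulVmx // mul1mx ev scalemxAr.
Qed.

Lemma conjugated_rotmx_entry10_neq0 (D : 'M[R]_2) (a b : R) :
  b != 0 -> conjugated D (rotmx a b) -> D 1 0 != 0.
Proof.
move=> b0 hD; apply/eqP => D10.
pose e : 'cV[R]_2 := delta_mx 0 0.
have e_neq0 : e != 0.
  by apply/eqP => /matrixP/(_ 0 0)/eqP; rewrite !mxE /= oner_eq0.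
have ev : D *m e = D 0 0 *: e.
  apply/matrixP => i j; rewrite (ord1 j) !mxE big_ord2 !mxE /= mulr1 mulr0 addr0.
  by case: (ord2_cases i) => ->; rewrite /= ?mulr1 ?mulr0.
have [u u0] := conjugated_eigenvector hD ev e_neq0.
by move/(rotmx_eigenvector_eq0 b0)/eqP; rewrite (negbTE u0).
Qed.

End Rotation.

Section MatrixExponential.
Variable R : realType.

Definition mx_abs_sum m n (A : 'M[R]_(m, n)) : R := \sum_i \sum_j `|A i j|.

Lemma mx_abs_sum_ge0 m n (A : 'M[R]_(m, n)) : 0 <= mx_abs_sum A.
Proof. by apply: sumr_ge0 => i _; apply: sumr_ge0 => j _. Qed.

Lemma abs_entry_le_mx_abs_sum m n (A : 'M[R]_(m, n)) i j :
  `|A i j| <= mx_abs_sum A.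
Proof.
rewrite /mx_abs_sum (bigD1 i) //= (bigD1 j) //= -addrA lerDl.
by apply: addr_ge0; apply: sumr_ge0 => *; [|apply: sumr_ge0 => *].
Qed.

Lemma abs_exp_entry_le n (A : 'M[R]_n) k i j :
  `|(A ^+ k) i j| <= mx_abs_sum A ^+ k.
Proof.
elim: k i j => [|k IH] i j.
  by rewrite expr0 mxE; case: (i == j); rewrite ?normr1 ?normr0.
rewrite exprSr -mulmxE mxE.
apply: le_trans (ler_norm_sum _ _ _) _.
apply: (@le_trans _ _ (\sum_l mx_abs_sum A ^+ k * `|A l j|)).
  by apply: ler_sum => l _; rewrite normrM ler_wpM2r.
rewrite -mulr_sumr exprSr ler_wpM2l ?exprn_ge0 ?mx_abs_sum_ge0 //.
rewrite /mx_abs_sum exchange_big [leRHS](bigD1 j) //= lerDl.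
by apply: sumr_ge0 => *; apply: sumr_ge0 => *.
Qed.

Lemma geometric_sum_le (q : R) n : 0 <= q -> q <= 1 / 2 ->
  \sum_(k < n) q ^+ k <= 2 - 2 * q ^+ n.
Proof.
move=> q0 q1; elim: n => [|n IH]; first by rewrite big_ord0 expr0; lra.
rewrite big_ord_recr /= exprS.
have : 0 <= q ^+ n by exact: exprn_ge0.
nra.
Qed.

Definition expm_term (s : R) (D : 'M[R]_2) i j (k : nat) : R :=
  s ^+ k / (k`!)%:R * (D ^+ k) i j.

Lemma expm_entryE (s : R) (D : 'M[R]_2) i j :
  expm s D i j = limn (series (expm_term s D i j)).
Proof.
rewrite mxE; congr (limn _); apply: funext => n.
by rewrite seriesEord /= summxE; apply: eq_bigr => k _; rewrite !mxE.
Qed.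

Lemma abs_expm_term_le (s : R) (D : 'M[R]_2) i j k :
  `|expm_term s D i j k| <= (`|s| * mx_abs_sum D) ^+ k.
Proof.
rewrite /expm_term !normrM normfV normrX exprMn.
apply: ler_pM; rewrite ?mulr_ge0 ?invr_ge0 ?exprn_ge0 ?abs_exp_entry_le //.
apply: ler_piMr; rewrite ?exprn_ge0 // ger0_norm // invf_le1 ?ltr0n ?fact_gt0 //.
by rewrite ler1n fact_gt0.
Qed.

Section SmallTime.
Variables (s : R) (D : 'M[R]_2).
Let q := `|s| * mx_abs_sum D.
Hypothesis q_le_half : q <= 1 / 2.

Lemma is_cvg_expm_series i j : cvgn (series (expm_term s D i j)).
Proof.
have q0 : 0 <= q by rewrite mulr_ge0 ?mx_abs_sum_ge0.
apply: normed_cvg; apply: (@series_le_cvg _ _ (geometric 1 q)).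
- by move=> n; rewrite normr_ge0.
- by move=> n /=; rewrite mul1r exprn_ge0.
- by move=> n /=; rewrite mul1r abs_expm_term_le.
- apply: is_cvg_geometric_series; rewrite ger0_norm //.
  by apply: le_lt_trans q_le_half _; lra.
Qed.

Lemma expm_series_first_order i j n :
  `|series (expm_term s D i j) n.+2 - ((i == j)%:R + s * D i j)| <= 2 * q ^+ 2.
Proof.
have q0 : 0 <= q by rewrite mulr_ge0 ?mx_abs_sum_ge0.
have tail : `|series (expm_term s D i j) n.+2 - ((i == j)%:R + s * D i j)|
    <= \sum_(k < n) q ^+ k.+2.
  elim: n => [|n IH].
    rewrite big_ord0 !seriesSr /= seriesEord /= big_ord0 /expm_term.
    by rewrite expr0 expr1 /= !mxE !divr1 !mul1r add0r subrr normr0.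
  rewrite seriesSr big_ord_recr /= -addrAC.
  by apply: le_trans (ler_normD _ _) _; apply: lerD; rewrite ?abs_expm_term_le.
apply: le_trans tail _.
rewrite (eq_bigr (fun k : 'I_n => q ^+ 2 * q ^+ k)); last first.
  by move=> k _; rewrite -exprD add2n.
rewrite -mulr_sumr.
have := geometric_sum_le n q0 q_le_half.
have : 0 <= q ^+ n by exact: exprn_ge0.
have : 0 <= q ^+ 2 by exact: exprn_ge0.
nra.
Qed.

Lemma expm_entry_first_order i j :
  `|expm s D i j - ((i == j)%:R + s * D i j)| <= 2 * q ^+ 2.
Proof.
have near_first_order : \forall n \near \oo%classic,
    `|series (expm_term s D i j) n - ((i == j)%:R + s * D i j)| <= 2 * q ^+ 2.
  near=> n.
  have /subnK <- : (2 <= n)%N by near: n; exact: nbhs_infty_ge.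
  by rewrite addn2 expm_series_first_order.
rewrite expm_entryE ler_distl; apply/andP; split.
- apply: limr_ge; first exact: is_cvg_expm_series.
  by apply: filterS near_first_order => n; rewrite ler_distl => /andP[].
- apply: limr_le; first exact: is_cvg_expm_series.
  by apply: filterS near_first_order => n; rewrite ler_distl => /andP[].
Unshelve. all: by end_near.
Qed.

End SmallTime.

Lemma expm0_entry (D : 'M[R]_2) i j : expm 0 D i j = (i == j)%:R.
Proof.
have half : `|0 : R| * mx_abs_sum D <= 1 / 2 by rewrite normr0 mul0r; lra.
have := expm_entry_first_order half i j.
by rewrite normr0 !mul0r expr0n /= mulr0 addr0 normr_le0 subr_eq0 => /eqP.
Qed.

Lemma expm_offdiag_neq0 (D : 'M[R]_2) i j : i != j -> D i j != 0 ->
  exists2 s, 0 < s & expm s D i j != 0.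
Proof.
move=> ij Dij; set d := `|D i j|; set m := mx_abs_sum D.
have d0 : 0 < d by rewrite normr_gt0.
have m0 : 0 < m by apply: lt_le_trans (abs_entry_le_mx_abs_sum D i j).
have dm : d <= m by exact: abs_entry_le_mx_abs_sum.
pose s := d / (4 * m ^+ 2).
have s0 : 0 < s by rewrite divr_gt0 // mulr_gt0 // exprn_gt0.
have sd : s * (4 * m ^+ 2) = d.
  by rewrite mulfVK // mulf_neq0 // expf_neq0 // lt0r_neq0.
have sm : `|s| * m <= 1 / 2.
  have : s * m * (4 * m) = d by rewrite -sd; ring.
  rewrite ger0_norm; [nra | exact: ltW].
exists s => //; apply/eqP => E0.
have := expm_entry_first_order sm i j.
rewrite E0 (negbTE ij) !add0r normrN normrM !(ger0_norm (ltW s0)) -/d -/m.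
(* this s makes the quadratic error 2 (s m)^2 = s d / 2 smaller than s d *)
have -> : 2 * (s * m) ^+ 2 = s * d / 2 by rewrite -sd; field.
have : 0 < s * d by rewrite mulr_gt0.
lra.
Qed.

End MatrixExponential.

Section Observability.
Variable R : realType.

Lemma piK_ker_hmap_eq (beta3 : R) (g1 g2 : R2 R) : beta3 != 0 ->
  piK (kerR2 (hmap beta3)) g1 = piK (kerR2 (hmap beta3)) g2 ->
  g1.1 = g2.1 /\ g1.2 1 0 = g2.2 1 0.
Proof.
move=> b0 e.
have : piK (kerR2 (hmap beta3)) g2 g1.
  rewrite -e; exists (oneR2 R).
    rewrite /kerR2 /hmap /=; congr pair.
    by apply/matrixP => i j; rewrite !mxE mulr0 if_same.
  by rewrite /mulR2 /= addr0 mulmx0 addr0 -surjective_pairing.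
case=> k hk <-.
have k1 : k.1 = 0 by have := congr1 fst hk.
have k2 : k.2 1 0 = 0.
  have := congr1 (fun g : R2 R => g.2 1 0) hk; rewrite /= !mxE /=.
  by move/eqP; rewrite mulf_eq0 (negbTE b0) => /eqP.
rewrite /mulR2 /= k1 addr0; split => //.
by rewrite !mxE big_ord2 k2 mulr0 addr0 !mxE /= mul0r addr0.
Qed.

Lemma lvf_flow_sub (D : 'M[R]_2) (xi : 'cV[R]_2) s t (v1 v2 : 'cV[R]_2) :
  (lvf_flow D xi s (t, v1)).2 - (lvf_flow D xi s (t, v2)).2 =
  expm s D *m (v1 - v2).
Proof. by rewrite /lvf_flow /= mulmxBr opprD addrACA subrr addr0. Qed.

Lemma expm_mul_entry1_neq0 (D : 'M[R]_2) (w : 'cV[R]_2) :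
  D 1 0 != 0 -> w != 0 -> exists2 s, 0 <= s & (expm s D *m w) 1 0 != 0.
Proof.
move=> D10 w_neq0.
have expm_w s :
    (expm s D *m w) 1 0 = expm s D 1 0 * w 0 0 + expm s D 1 1 * w 1 0.
  by rewrite mxE big_ord2.
have [w1|w1] := eqVneq (w 1 0) 0; last first.
  by exists 0 => //; rewrite expm_w !expm0_entry /= mul0r add0r mul1r.
have w0 : w 0 0 != 0.
  apply: contraNneq w_neq0 => w0; apply/eqP/matrixP => i j.
  by rewrite (ord1 j) mxE; case: (ord2_cases i) => ->.
have [s s0 Es] := expm_offdiag_neq0 (isT : 1 != 0 :> 'I_2) D10.
by exists s; rewrite ?ltW // expm_w w1 mulr0 addr0 mulf_neq0.
Qed.

End Observability.

Theorem proposition3p6 (R : realType) (D : 'M[R]_2) (xi : 'cV[R]_2)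
    (a b beta3 : R) :
  b != 0 -> conjugated D (rotmx a b) -> beta3 != 0 ->
  observable (lvf_flow D xi) (piK (kerR2 (hmap beta3))).
Proof.
move=> b0 hD b3 [t1 v1] [t2 v2] g12.
have [t12|t12] := eqVneq t1 t2; last first.
  by exists 0; split => // /(piK_ker_hmap_eq b3) [/eqP]; rewrite (negbTE t12).
subst t2; have v12 : v1 - v2 != 0.
  by rewrite subr_eq0; apply: contra_not_neq g12 => ->.
have D10 := conjugated_rotmx_entry10_neq0 b0 hD.
have [s s0 Es] := expm_mul_entry1_neq0 D10 v12.
exists s; split => // /(piK_ker_hmap_eq b3) [_ e].
move: Es; rewrite -(lvf_flow_sub D xi s t1).
by rewrite mxE [X in _ + X]mxE e subrr eqxx.
Qed.
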